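(* Let $|\xi\rangle=\sum_{n=0}^{L}\lambda_n|n\rangle$ be a normalized single-mode pure state that is a finite superposition of Fock states ($L<\infty$) with $|\xi\rangle\neq|0\rangle$. Then there exist two-outcome projective measurements $\{\Pi^A_0,\Pi^A_1\}$ on mode $A$ and $\{\Pi^B_0,\Pi^B_1\}$ on mode $B$ (independent of the inputs) such that the GYNI value satisfies $\mathcal J>\tfrac12$.
   Context: Modes $A$ and $B$ have annihilation operators $a,b$ and Fock states $|n\rangle$. For a normalized single-mode state $|\xi\rangle=\sum_n\lambda_n|n\rangle$ with $|\lambda_0|<1$ and input bits $x,y\in\{0,1\}$, the phase-encoded generalized NOON state is $|\Phi_{xy}\rangle=\mathcal N_{xy}^{-1/2}\big((-1)^x|\xi\rangle_A|0\rangle_B+(-1)^y|0\rangle_A|\xi\rangle_B\big)$ with $\mathcal N_{xy}=2(1+(-1)^{x+y}|\lambda_0|^2)$. The lossless 50:50 beam splitter is the unitary $U$ with $U|0,0\rangle=|0,0\rangle$, $Ua^\dagger U^\dagger=(a^\dagger+b^\dagger)/\sqrt2$, $Ub^\dagger U^\dagger=(a^\dagger-b^\dagger)/\sqrt2$; set $|\Phi''_{xy}\rangle=U|\Phi_{xy}\rangle$. For two-outcome projective measurements $\{\Pi^A_0,\Pi^A_1\}$, $\{\Pi^B_0,\Pi^B_1\}$ not depending on $x,y$, $P(a,b|x,y)=\langle\Phi''_{xy}|\Pi^A_a\otimes\Pi^B_b|\Phi''_{xy}\rangle$ and $\mathcal J=\frac14\big[P(0,0|0,0)+P(0,0|1,1)+P(1,1|0,1)+P(1,1|1,0)\big]$.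 The GYNI inequality is $\mathcal J\le\frac12$. *)

(* Complex scalars: an arbitrary numClosedFieldType C
   (algebraically closed field with conjugation and norm, e.g. algC). *)
From HB Require Import structures.
From mathcomp Require Import all_boot all_order all_algebra.
Set Implicit Arguments. Unset Strict Implicit. Unset Printing Implicit Defensive.
Import Order.TTheory GRing.Theory Num.Theory.
Local Open Scope ring_scope.

(* Single-mode Fock space truncated to photon numbers 0..L (dimension L+1).
   A two-mode vector is a matrix Psi : 'M_(L.+1), Psi m k = <m,k|Psi>
   (row index = mode A, column index = mode B). *)

Section Fock.
Variables (C : numClosedFieldType) (L : nat).

(* creation operator: a^dag |j> = sqrt(j+1) |j+1>  (exact on photon numbers < L) *)
Definition adag : 'M[C]_L.+1 :=
  \matrix_(i, j) (if (i : nat) == j.+1 then sqrtC ((i : nat)%:R) else 0).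

Definition vac : 'M[C]_L.+1 := delta_mx ord0 ord0.

Definition crA (Psi : 'M[C]_L.+1) : 'M[C]_L.+1 := adag *m Psi.
Definition crB (Psi : 'M[C]_L.+1) : 'M[C]_L.+1 := Psi *m adag^T.

(* images under the beam splitter: U a^dag U^dag = (a^dag + b^dag)/sqrt2,
   U b^dag U^dag = (a^dag - b^dag)/sqrt2 *)
Definition bsA (Psi : 'M[C]_L.+1) : 'M[C]_L.+1 := (sqrtC 2)^-1 *: (crA Psi + crB Psi).
Definition bsB (Psi : 'M[C]_L.+1) : 'M[C]_L.+1 := (sqrtC 2)^-1 *: (crA Psi - crB Psi).

(* |xi>_A|0>_B = sum_n lam_n (a^dag)^n / sqrt(n!) |0,0>, and
   U |xi>_A|0>_B = sum_n lam_n (U a^dag U^dag)^n / sqrt(n!) U|0,0>, U|0,0>=|0,0> *)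
Definition xiA (lam : 'I_L.+1 -> C) : 'M[C]_L.+1 :=
  \sum_(n < L.+1) (lam n / sqrtC (n`!)%:R) *: iter n crA vac.
Definition xiB (lam : 'I_L.+1 -> C) : 'M[C]_L.+1 :=
  \sum_(n < L.+1) (lam n / sqrtC (n`!)%:R) *: iter n crB vac.
Definition U_xiA (lam : 'I_L.+1 -> C) : 'M[C]_L.+1 :=
  \sum_(n < L.+1) (lam n / sqrtC (n`!)%:R) *: iter n bsA vac.
Definition U_xiB (lam : 'I_L.+1 -> C) : 'M[C]_L.+1 :=
  \sum_(n < L.+1) (lam n / sqrtC (n`!)%:R) *: iter n bsB vac.

Definition Nxy (lam : 'I_L.+1 -> C) (x y : bool) : C :=
  2 * (1 + (-1) ^+ (x + y) * `|lam ord0| ^+ 2).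

Definition Phi (lam : 'I_L.+1 -> C) (x y : bool) : 'M[C]_L.+1 :=
  (sqrtC (Nxy lam x y))^-1 *: ((-1) ^+ x *: xiA lam + (-1) ^+ y *: xiB lam).

Definition Phi2 (lam : 'I_L.+1 -> C) (x y : bool) : 'M[C]_L.+1 :=
  (sqrtC (Nxy lam x y))^-1 *: ((-1) ^+ x *: U_xiA lam + (-1) ^+ y *: U_xiB lam).

Definition is_projector (P : 'M[C]_L.+1) : Prop :=
  P *m P = P /\ (forall i j, P j i = (P i j)^*).

Definition is_proj_meas (P0 P1 : 'M[C]_L.+1) : Prop :=
  is_projector P0 /\ is_projector P1 /\ P0 + P1 = 1%:M.

Definition expect (PA PB Psi : 'M[C]_L.+1) : C :=
  \sum_(m < L.+1) \sum_(k < L.+1) (Psi m k)^* * (PA *m Psi *m PB^T) m k.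

Definition GYNI (lam : 'I_L.+1 -> C) (PA0 PA1 PB0 PB1 : 'M[C]_L.+1) : C :=
  4^-1 * ( expect PA0 PB0 (Phi2 lam false false)
         + expect PA0 PB0 (Phi2 lam true true)
         + expect PA1 PB1 (Phi2 lam false true)
         + expect PA1 PB1 (Phi2 lam true false)).

End Fock.

From HB Require Import structures.
From mathcomp Require Import all_boot all_order all_algebra.
From mathcomp Require Import ring.
Set Implicit Arguments. Unset Strict Implicit. Unset Printing Implicit Defensive.
Import Order.TTheory GRing.Theory Num.Theory.
Local Open Scope ring_scope.

(* Take the measurements diagonal in the Fock basis:
   Pi^A_0 projects onto |M>, where M is the largest photon number with
   lam_M <> 0, and Pi^B_0 projects onto the even photon numbers.
   The beam splitter sends the n-photon component of |xi>_A|0>_B to a binomial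
   distribution of the n photons over the two modes, and the sign (-1)^y in
   front of the second branch of Phi_xy multiplies the amplitude of k photons
   in mode B by (-1)^k.  Hence Phi''_xy only populates |m,k> with
   x (+) y = parity of k.  For x (+) y = 0 the event (|M>, even) has
   probability 2 P(M,0) / (1 + |lam_0|^2), where P(M,0) = |lam_M|^2 / 2^M > 0,
   because nothing above M exists; for x (+) y = 1 the event (not M, odd) is
   certain. *)

Lemma sum_ord_pick (R : nmodType) n m (G : nat -> R) :
  \sum_(i < n) (if (i : nat) == m then G i else 0) = if (m < n)%N then G m else 0.
Proof. by rewrite -big_mkcond big_ord1_eq. Qed.

Lemma sum_square_by_diagonals (R : nmodType) (N : nat) (F : nat -> nat -> R) :
  (forall n k, (N <= n)%N -> F n k = 0) ->
  \sum_(j < N) \sum_(k < N) F (j + k)%N k = \sum_(n < N) \sum_(k < n.+1) F n k.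
Proof.
move=> F_out.
have column (k : 'I_N) :
    \sum_(j < N) F (j + k)%N k = \sum_(n < N | (k <= n)%N) F n k.
  rewrite -(big_mkord xpredT (fun j => F (j + k)%N k)).
  rewrite -(big_mkord (fun n => k <= n)%N (fun n => F n k)).
  have -> : \sum_(0 <= n < N | (k <= n)%N) F n k = \sum_(k <= n < N) F n k.
    by rewrite (big_nat_widenl _ _ _ xpredT _ (leq0n k)).
  have -> : \sum_(0 <= j < N) F (j + k)%N k = \sum_(k <= n < N + k) F n k.
    by rewrite (big_addn 0 (N + k) k) addnK.
  rewrite (@big_cat_nat _ _ _ N) ?leq_addr ?(ltnW (ltn_ord k)) //=.
  rewrite [X in _ + X]big1_seq ?addr0 // => n /andP[_].
  by rewrite mem_index_iota => /andP[/F_out].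
rewrite exchange_big /=.
rewrite (eq_bigr (fun k : 'I_N => \sum_(n < N) if (k <= n)%N then F n k else 0)); last first.
  by move=> k _; rewrite column big_mkcond.
rewrite exchange_big /=; apply: eq_bigr => n _.
rewrite (big_ord_widen _ (fun k => F n k) (ltn_ord n)) [RHS]big_mkcond /=.
by apply: eq_bigr => k _; rewrite ltnS.
Qed.

(* twice the number of odd-sized subsets: (1+1)^n - (1-1)^n *)
Lemma sum_odd_binomial (R : comPzRingType) n :
  (\sum_(k < n.+1) (odd k)%:R * 'C(n, k)%:R) *+ 2 = 2 ^+ n - (n == 0%N)%:R :> R.
Proof.
have two : 2 = 1 + 1 :> R by rewrite -mulr2n.
have vanish : (n == 0%N)%:R = (1 - 1) ^+ n :> R by rewrite subrr expr0n.
rewrite vanish two !exprDn -sumrB -sumrMnl; apply: eq_bigr => k _.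
rewrite !expr1n !mul1r -signr_odd; case: (odd k) => /=.
  by rewrite expr1 mul1r mulNrn opprK mulr2n.
by rewrite mul0r mul0rn subrr.
Qed.

Section FockCoordinates.
Variables (C : numClosedFieldType) (L : nat).

Definition invsqrt2 : C := (sqrtC 2)^-1.
(* Fock normalisation: |n> = (a^dag)^n |0> / sqfact n *)
Definition sqfact (n : nat) : C := sqrtC (n`!)%:R.

Lemma sqfact0 : sqfact 0 = 1.
Proof. by rewrite /sqfact sqrtC1. Qed.

Lemma sqfactS n : sqfact n.+1 = sqrtC n.+1%:R * sqfact n.
Proof. by rewrite /sqfact factS natrM sqrtCM // qualifE /= ler0n. Qed.

Lemma crA_E (Psi : 'M[C]_L.+1) (j k : 'I_L.+1) :
  crA Psi j k = if (j : nat) is j'.+1 then sqrtC j%:R * Psi (inord j') k else 0.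
Proof.
rewrite /crA mxE; case: j => [[|j'] hj] /=.
  by rewrite big1 // => i _; rewrite mxE mul0r.
rewrite (eq_bigr (fun i : 'I_L.+1 =>
    if (i : nat) == j' then sqrtC j'.+1%:R * Psi (inord i) k else 0)); last first.
  by move=> i _; rewrite mxE eqSS eq_sym inord_val; case: eqP; rewrite ?mul0r.
by rewrite (@sum_ord_pick _ _ _ (fun i => sqrtC j'.+1%:R * Psi (inord i) k)) ltnW.
Qed.

Lemma crB_E (Psi : 'M[C]_L.+1) (j k : 'I_L.+1) :
  crB Psi j k = if (k : nat) is k'.+1 then sqrtC k%:R * Psi j (inord k') else 0.
Proof.
rewrite /crB mxE; case: k => [[|k'] hk] /=.
  by rewrite big1 // => i _; rewrite !mxE mulr0.
rewrite (eq_bigr (fun i : 'I_L.+1 =>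
    if (i : nat) == k' then sqrtC k'.+1%:R * Psi j (inord i) else 0)); last first.
  by move=> i _; rewrite !mxE eqSS eq_sym inord_val mulrC; case: eqP; rewrite ?mul0r.
by rewrite (@sum_ord_pick _ _ _ (fun i => sqrtC k'.+1%:R * Psi j (inord i))) ltnW.
Qed.

(* Coordinates of (invsqrt2 (a^dag + e b^dag))^n |0,0>: a binomial expansion in
   which the Fock normalisations sqrt(j!) sqrt(k!) appear. *)
Lemma iter_beam_vac (f : 'M[C]_L.+1 -> 'M[C]_L.+1) (e : C)
    (f_E : forall Psi, f Psi = invsqrt2 *: (crA Psi + e *: crB Psi)) n (j k : 'I_L.+1) :
  iter n f (vac C L) j k =
  if (j + k == n)%N then invsqrt2 ^+ n * 'C(n, j)%:R * sqfact j * sqfact k * e ^+ k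
  else 0.
Proof.
elim: n j k => [|n IH] j k.
  rewrite /vac mxE; case: j => [[|j] hj]; case: k => [[|k] hk] //=.
  by rewrite sqfact0 !expr0 !mul1r.
rewrite iterS f_E.
rewrite mxE [in LHS]mxE [in X in _ + X]mxE crA_E crB_E.
case: j => [[|j] hj]; case: k => [[|k] hk] /=; rewrite ?IH /= ?inordK //;
  try exact: ltnW.
all: rewrite ?addSn ?addnS ?add0n ?addn0 ?eqSS; try (case: eqP => E);
  rewrite ?mulr0 ?addr0 ?add0r //.
all: rewrite ?binS ?bin0 ?natrD ?sqfactS ?sqfact0 ?exprS; try ring.
by rewrite -E (bin_small (ltnSn j)); ring.
Qed.

Variable lam : 'I_L.+1 -> C.

Definition coef (n : nat) : C := if (n < L.+1)%N then lam (inord n) else 0.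

Lemma coef_ord (n : 'I_L.+1) : coef n = lam n.
Proof. by rewrite /coef ltn_ord inord_val. Qed.

(* <j,k| U (|xi>_A |0>_B): the photons of the n-photon component are split
   binomially between the two output modes *)
Definition amp (j k : nat) : C :=
  coef (j + k) / sqfact (j + k) *
  (invsqrt2 ^+ (j + k) * 'C(j + k, j)%:R * sqfact j * sqfact k).

(* coordinates of sum_n lam_n / sqrt(n!) f^n |0,0> for f as in iter_beam_vac:
   only the component n = j + k contributes *)
Lemma beam_state_E (f : 'M[C]_L.+1 -> 'M[C]_L.+1) (e : C)
    (f_E : forall Psi, f Psi = invsqrt2 *: (crA Psi + e *: crB Psi)) (j k : 'I_L.+1) :
  (\sum_(n < L.+1) (lam n / sqfact n) *: iter n f (vac C L)) j k = e ^+ k * amp j k.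
Proof.
rewrite summxE (eq_bigr (fun n : 'I_L.+1 => if (n : nat) == (j + k)%N then
    coef n / sqfact n * (invsqrt2 ^+ n * 'C(n, j)%:R * sqfact j * sqfact k * e ^+ k)
    else 0)); last first.
  by move=> n _; rewrite mxE (iter_beam_vac f_E) coef_ord eq_sym; case: eqP; rewrite ?mulr0.
rewrite (@sum_ord_pick _ _ _ (fun n => coef n / sqfact n *
  (invsqrt2 ^+ n * 'C(n, j)%:R * sqfact j * sqfact k * e ^+ k))) /amp.
by case: ifP => [_|out]; [ring | rewrite /coef out !mul0r mulr0].
Qed.

Lemma U_xiA_E (j k : 'I_L.+1) : U_xiA lam j k = amp j k.
Proof. by rewrite (@beam_state_E (@bsA C L) 1) ?expr1n ?mul1r // => Psi; rewrite scale1r. Qed.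

Lemma U_xiB_E (j k : 'I_L.+1) : U_xiB lam j k = (-1) ^+ k * amp j k.
Proof. by rewrite (@beam_state_E (@bsB C L) (-1)) // => Psi; rewrite scaleN1r. Qed.

Lemma Phi2_E x y (j k : 'I_L.+1) : Phi2 lam x y j k =
  (sqrtC (Nxy lam x y))^-1 * ((-1) ^+ x + (-1) ^+ y * (-1) ^+ k) * amp j k.
Proof.
rewrite /Phi2 mxE [in LHS]mxE [in X in _ + X]mxE [in X in X + _]mxE.
by rewrite U_xiA_E U_xiB_E; ring.
Qed.

End FockCoordinates.

Section Weights.
Variables (C : numClosedFieldType) (L : nat) (lam : 'I_L.+1 -> C).

Lemma norm_sqfact m : `|sqfact C m| ^+ 2 = (m`!)%:R.
Proof. by rewrite ger0_norm ?sqrtC_ge0 ?ler0n // sqrtCK. Qed.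

Lemma norm_invsqrt2X n : `|invsqrt2 C ^+ n| ^+ 2 = 2^-1 ^+ n.
Proof.
have norm2 : `|invsqrt2 C| ^+ 2 = 2^-1.
  by rewrite normfV exprVn ger0_norm ?sqrtC_ge0 ?ler0n // sqrtCK.
by rewrite normrX -exprM mulnC exprM norm2.
Qed.

Definition weight (j k : nat) : C := `|amp lam j k| ^+ 2.

Lemma weight_E j k :
  weight j k = `|coef lam (j + k)| ^+ 2 * 2^-1 ^+ (j + k) * 'C(j + k, k)%:R.
Proof.
have binC : 'C(j + k, j) = 'C(j + k, k).
  by rewrite -[X in 'C(_, X)](addnK k j) bin_sub // leq_addl.
have factE : ((j + k)`!)%:R = 'C(j + k, k)%:R * ((k`!)%:R * (j`!)%:R) :> C.
  by rewrite -!natrM -(bin_fact (leq_addl j k)) addnK.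
have binC0 : 'C(j + k, k)%:R != 0 :> C by rewrite pnatr_eq0 -lt0n bin_gt0 leq_addl.
have factC0 m : (m`!)%:R != 0 :> C by rewrite pnatr_eq0 -lt0n fact_gt0.
rewrite /weight /amp binC !normrM normfV !exprMn norm_invsqrt2X normr_nat.
rewrite !exprVn !norm_sqfact factE; field.
by rewrite binC0 !factC0 expf_neq0 // pnatr_eq0.
Qed.

Lemma sum_odd_weight :
  \sum_(j < L.+1) \sum_(k < L.+1) (odd k)%:R * weight j k =
  2^-1 * (\sum_(n < L.+1) `|lam n| ^+ 2 - `|lam ord0| ^+ 2).
Proof.
pose F n k : C := (odd k)%:R * (`|coef lam n| ^+ 2 * 2^-1 ^+ n * 'C(n, k)%:R).
have F_out n k : (L.+1 <= n)%N -> F n k = 0.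
  by move=> hn; rewrite /F /coef ltnNge hn normr0 expr0n !mul0r mulr0.
under eq_bigr => j _ do under eq_bigr => k _ do rewrite weight_E.
rewrite (sum_square_by_diagonals F_out) /F.
have two_neq0 : (2 : C) != 0 by rewrite pnatr_eq0.
transitivity (\sum_(n < L.+1)
    2^-1 * (`|lam n| ^+ 2 - ((n : nat) == 0%N)%:R * `|lam n| ^+ 2)).
  apply: eq_bigr => n _.
  transitivity (`|lam n| ^+ 2 * 2^-1 ^+ n * \sum_(k < n.+1) (odd k)%:R * 'C(n, k)%:R).
    by rewrite mulr_sumr coef_ord; apply: eq_bigr => k _; ring.
  have -> : \sum_(k < n.+1) (odd k)%:R * 'C(n, k)%:R =
      2^-1 * (2 ^+ n - ((n : nat) == 0%N)%:R) :> C.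
    by rewrite -(sum_odd_binomial C) [X in _ * X]mulr2n; field.
  case: eqP => [->|_]; rewrite ?expr0 ?mul1r ?mul0r ?subr0 ?subrr ?mulr0 //.
  by rewrite exprVn; field; rewrite expf_neq0.
rewrite -mulr_sumr sumrB [X in _ - X](bigD1 ord0) //= [X in _ - (_ + X)]big1 ?addr0 ?mul1r //.
by move=> n n0; rewrite (_ : (n : nat) == 0%N = false) ?mul0r //; exact: negbTE.
Qed.

Lemma weight_top_row (M : 'I_L.+1)
    (above : forall n : 'I_L.+1, (M < n)%N -> lam n = 0) k :
  (0 < k)%N -> weight M k = 0.
Proof.
move=> k_gt0; rewrite weight_E /coef; case: ifP => [hMk|_]; last first.
  by rewrite normr0 expr0n !mul0r.
by rewrite above ?normr0 ?expr0n ?mul0r // inordK //= -addn1 leq_add2l.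
Qed.

Lemma weight_top_vac (M : 'I_L.+1) : lam M != 0 -> 0 < weight M 0.
Proof.
move=> nzM; rewrite weight_E addn0 coef_ord bin0 mulr1.
by rewrite mulr_gt0 ?exprn_gt0 ?normr_gt0 ?invr_gt0 ?ltr0n.
Qed.

End Weights.

Section DiagonalMeasurements.
Variables (C : numClosedFieldType) (L : nat).

Definition dg (p : pred 'I_L.+1) : 'M[C]_L.+1 := diag_mx (\row_i (p i)%:R).

Lemma dg_projector p : is_projector (dg p).
Proof.
split.
  apply/matrixP => i j; rewrite mul_diag_mx !mxE.
  by case: (p i); case: (i == j); rewrite ?mulr1n ?mulr0n ?mul1r ?mul0r.
move=> i j; rewrite !mxE eq_sym.
by case: eqP => [->|]; rewrite ?mulr0n ?mulr1n ?conjC0 // conjC_nat.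
Qed.

Lemma dg_meas p : is_proj_meas (dg p) (dg (predC p)).
Proof.
do 2!(split; first exact: dg_projector).
apply/matrixP => i j; rewrite !mxE /=.
by case: (p i); case: (i == j); rewrite ?mulr1n ?mulr0n ?addr0 ?add0r.
Qed.

Lemma expect_dg p q (Psi : 'M[C]_L.+1) : expect (dg p) (dg q) Psi =
  \sum_(m < L.+1) \sum_(k < L.+1) (p m && q k)%:R * `|Psi m k| ^+ 2.
Proof.
apply: eq_bigr => m _; apply: eq_bigr => k _.
rewrite tr_diag_mx mul_diag_mx mul_mx_diag !mxE normCK -mulnb natrM; ring.
Qed.

End DiagonalMeasurements.
Arguments dg {C L}.

(* 1 + |lam_0|^2 is the normalisation of Phi_xy for x (+) y = 0 *)
Lemma one_add_sqr_norm_gt0 (C : numDomainType) (z : C) : 0 < 1 + `|z| ^+ 2.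
Proof. by rewrite (lt_le_trans ltr01) // lerDl exprn_ge0. Qed.

Lemma norm_invsqrtC (C : numClosedFieldType) (N : C) :
  0 <= N -> `|(sqrtC N)^-1| ^+ 2 = N^-1.
Proof. by move=> N_ge0; rewrite normfV exprVn ger0_norm ?sqrtC_ge0 // sqrtCK. Qed.

Lemma norm_sign_sum (C : numClosedFieldType) (x y : bool) (k : nat) :
  `|(-1) ^+ x + (-1) ^+ y * (-1) ^+ k| ^+ 2 = 4 * ((x (+) y) == odd k)%:R :> C.
Proof.
rewrite -[(-1) ^+ k]signr_odd; case: x; case: y; case: (odd k) => /=.
all: rewrite ?expr0 ?expr1 normCK ?mulr1 ?mul1r ?mulN1r ?rmorphD ?rmorphN ?conjC1; ring.
Qed.

Section GYNIValue.
Variables (C : numClosedFieldType) (L : nat) (lam : 'I_L.+1 -> C).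
Hypothesis notvac : `|lam ord0| < 1.

Lemma Nxy_gt0 x y : 0 < Nxy lam x y.
Proof.
have a_lt1 : `|lam ord0| ^+ 2 < 1 by rewrite exprn_ilt1.
rewrite /Nxy -signr_odd; case: (odd _); rewrite ?expr0 ?expr1 ?mul1r ?mulN1r.
  by rewrite mulr_gt0 // subr_gt0.
by rewrite mulr_gt0 // one_add_sqr_norm_gt0.
Qed.

Lemma expect_Phi2 pA pB x y : expect (dg pA) (dg pB) (Phi2 lam x y) =
  4 / Nxy lam x y * \sum_(m < L.+1) \sum_(k < L.+1)
     (pA m && pB k && ((x (+) y) == odd k))%:R * weight lam m k.
Proof.
rewrite expect_dg mulr_sumr; apply: eq_bigr => m _.
rewrite mulr_sumr; apply: eq_bigr => k _.
rewrite Phi2_E normrM exprMn -/(weight lam m k) normrM exprMn norm_sign_sum.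
rewrite norm_invsqrtC ?ltW ?Nxy_gt0 //.
by rewrite -!mulnb !natrM; ring.
Qed.

End GYNIValue.

Lemma top_mode (C : numClosedFieldType) (L : nat) (lam : 'I_L.+1 -> C) :
    \sum_(n < L.+1) `|lam n| ^+ 2 = 1 ->
  exists M : 'I_L.+1, lam M != 0 /\ forall n : 'I_L.+1, (M < n)%N -> lam n = 0.
Proof.
move=> norm1.
have [i0 nz_i0] : exists i, lam i != 0.
  apply/existsP; apply: contraT; rewrite negb_exists => /forallP all0.
  move: norm1; rewrite big1 => [/eqP|i _]; first by rewrite eq_sym oner_eq0.
  by move: (all0 i); rewrite negbK => /eqP ->; rewrite normr0 expr0n.
case: (@arg_maxnP _ i0 (fun i => lam i != 0) (fun i => i : nat) nz_i0) => M nzM maxM.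
exists M; split => // n; apply: contraTeq => nz_n; rewrite -leqNgt; exact: maxM.
Qed.

Section TopMode.
Variables (C : numClosedFieldType) (L : nat) (lam : 'I_L.+1 -> C).
Hypothesis norm1 : \sum_(n < L.+1) `|lam n| ^+ 2 = 1.
Hypothesis notvac : `|lam ord0| < 1.
Variable M : 'I_L.+1.
Hypothesis above : forall n : 'I_L.+1, (M < n)%N -> lam n = 0.

Definition even_photons : pred 'I_L.+1 := fun k => ~~ odd k.

Lemma sum_top_even : \sum_(m < L.+1) \sum_(k < L.+1)
    ((m == M) && ~~ odd k && (false == odd k))%:R * weight lam m k = weight lam M 0.
Proof.
rewrite (bigD1 M) //= [X in _ + X]big1 ?addr0; last first.
  by move=> m /negbTE ->; rewrite big1 // => k _; rewrite mul0r.
rewrite (bigD1 ord0) //= big1 ?addr0 => [|k nz_k]; first by rewrite eqxx mul1r.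
rewrite weight_top_row ?mulr0 // lt0n; apply: contra nz_k => /eqP k0.
by apply/eqP/val_inj.
Qed.

Lemma sum_rest_odd : \sum_(m < L.+1) \sum_(k < L.+1)
    ((m != M) && ~~ ~~ odd k && (true == odd k))%:R * weight lam m k =
  2^-1 * (1 - `|lam ord0| ^+ 2).
Proof.
have top_odd : \sum_(k < L.+1) (odd k)%:R * weight lam M k = 0.
  apply: big1 => k _; case: (posnP k) => [->|k_gt0]; first by rewrite mul0r.
  by rewrite weight_top_row ?mulr0.
rewrite -[X in 2^-1 * (X - _)]norm1 -sum_odd_weight [RHS](bigD1 M) //= top_odd add0r.
rewrite [LHS](bigD1 M) //= eqxx [X in X + _]big1 ?add0r; last first.
  by move=> k _; rewrite !mul0r.
apply: eq_bigr => m ->; apply: eq_bigr => k _.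
by case: (odd k); rewrite /= ?mul1r ?mul0r.
Qed.

Lemma GYNI_top_parity :
  GYNI lam (dg (pred1 M)) (dg (predC (pred1 M)))
           (dg even_photons) (dg (predC even_photons)) =
  2^-1 + weight lam M 0 / (1 + `|lam ord0| ^+ 2).
Proof.
rewrite /GYNI /even_photons !expect_Phi2 //= sum_top_even sum_rest_odd.
have a_lt1 : `|lam ord0| ^+ 2 < 1 by rewrite exprn_ilt1.
have nz_plus : 1 + `|lam ord0| ^+ 2 != 0 by rewrite gt_eqF // one_add_sqr_norm_gt0.
have nz_minus : 1 - `|lam ord0| ^+ 2 != 0 by rewrite gt_eqF // subr_gt0.
rewrite /Nxy /= expr0 expr1 sqrrN expr1n mul1r mulN1r.
by field; rewrite nz_plus nz_minus.
Qed.

End TopMode.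

Theorem mainTheorem2 (C : numClosedFieldType) (L : nat) (lam : 'I_L.+1 -> C)
    (hnorm : \sum_(n < L.+1) `|lam n| ^+ 2 = 1)
    (hnotvac : `|lam ord0| < 1) :
  exists PA0 PA1 PB0 PB1 : 'M[C]_L.+1,
    is_proj_meas PA0 PA1 /\ is_proj_meas PB0 PB1 /\
    2^-1 < GYNI lam PA0 PA1 PB0 PB1.
Proof.
have [M [nzM above]] := top_mode hnorm.
exists (dg (pred1 M)), (dg (predC (pred1 M))),
  (dg (@even_photons L)), (dg (predC (@even_photons L))).
do 2!(split; first exact: dg_meas).
by rewrite GYNI_top_parity // ltrDl divr_gt0 ?weight_top_vac ?one_add_sqr_norm_gt0.
Qed.
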